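(* Let $\Omega\subset\mathbb{R}^d$ be a bounded open set, $q\ge0$ an integer, $\lambda\in\mathbb{R}\setminus\{0\}$, $k\in C^q(\overline{\Omega}\times\overline{\Omega})$, $f\in C^q(\overline{\Omega})$. Let $X=\{x_1,\dots,x_n\}\subset\overline{\Omega}$ and $Y=\{y_1,\dots,y_m\}\subset\overline{\Omega}$ be finite sets, $\vec w\in\mathbb{R}^m$, and $R$ a real $m\times n$ matrix. Define $\mathcal{K}_{\vec h}\colon C^q(\overline{\Omega})\to C^q(\overline{\Omega})$ by $(\mathcal{K}_{\vec h}v)(x)=\sum_{i=1}^m w_i k(x,y_i)\sum_{j=1}^n R_{ij}v(x_j)$. Then the linear system $(\lambda I-KWR)\hat{\vec u}=f|_X$ has solutions if and only if the operator equation $(\lambda\mathcal{I}-\mathcal{K}_{\vec h})u_{\vec h}=f$ has solutions $u_{\vec h}\in C^q(\overline{\Omega})$. Moreover, if the two solution sets are nonempty, they are affine spaces of the same dimension.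
   Context: $C^q(\overline{\Omega})$ denotes functions whose partial derivatives up to order $q$ exist on $\Omega$ and extend continuously to $\overline{\Omega}$. $I$ is the $n\times n$ identity, $\mathcal{I}$ the identity operator, $K$ is the $n\times m$ matrix $K_{ij}=k(x_i,y_j)$, $W=\mathrm{diag}(\vec w)$, and $f|_X=(f(x_1),\dots,f(x_n))^T$. *)

From HB Require Import structures.
From mathcomp Require Import all_boot all_order all_algebra.
From mathcomp Require Import all_classical all_reals all_analysis.
Set Implicit Arguments. Unset Strict Implicit. Unset Printing Implicit Defensive.
Import Order.TTheory GRing.Theory Num.Theory.
Import numFieldNormedType.Exports.
Local Open Scope classical_set_scope.
Local Open Scope ring_scope.

Definition evec (R : realType) (d : nat) (i : 'I_d) : 'rV[R]_d := delta_mx 0 i.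

Fixpoint dpart (R : realType) (d : nat) (s : seq 'I_d) (f : 'rV[R]_d -> R)
  : 'rV[R]_d -> R :=
  match s with
  | [::] => f
  | i :: s' => fun x => derive (dpart s' f) x (evec R i)
  end.

(* C^q(closure O), O open: all (iterated) partial derivatives up to order q
   exist on O and extend continuously to closure O; in particular f itself is
   continuous on closure O.  Functions are total on R^d, only their values on
   closure O matter. *)
Definition Cq_on (R : realType) (d : nat) (O : set 'rV[R]_d) (q : nat)
  (f : 'rV[R]_d -> R) : Prop :=
  [/\ {within closure O, continuous f},
      (forall (s : seq 'I_d) (i : 'I_d), (size s < q)%N ->
          forall x, O x -> derivable (dpart s f) x (evec R i))
    & (forall s : seq 'I_d, (size s <= q)%N ->
          exists g : 'rV[R]_d -> R,
            {within closure O, continuous g} /\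
            (forall x, O x -> g x = dpart s f x))].

(* S (a set of real functions on T, identified when equal on A) is an affine
   space of (finite) dimension r in the space of real functions on A. *)
Definition affine_dim_on (T : Type) (R : realType) (A : set T)
  (S : set (T -> R)) (r : nat) : Prop :=
  exists (u0 : T -> R) (b : 'I_r -> T -> R),
    (forall c : 'I_r -> R,
        (forall t, A t -> \sum_(i < r) c i * b i t = 0) -> forall i, c i = 0) /\
    (forall v : T -> R,
        S v <-> exists c : 'I_r -> R,
                 forall t, A t -> v t = u0 t + \sum_(i < r) c i * b i t).

Definition prodset (R : realType) (d : nat) (O : set 'rV[R]_d) : set 'rV[R]_(d + d) :=
  [set z | O (lsubmx z) /\ O (rsubmx z)].

Definition kmat (R : realType) (d n m : nat) (k : 'rV[R]_d -> 'rV[R]_d -> R)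
  (x : 'I_n -> 'rV[R]_d) (y : 'I_m -> 'rV[R]_d) : 'M[R]_(n, m) :=
  \matrix_(i, j) k (x i) (y j).

Definition Kh (R : realType) (d n m : nat) (k : 'rV[R]_d -> 'rV[R]_d -> R)
  (x : 'I_n -> 'rV[R]_d) (y : 'I_m -> 'rV[R]_d) (w : 'I_m -> R)
  (Rm : 'M[R]_(m, n)) (v : 'rV[R]_d -> R) : 'rV[R]_d -> R :=
  fun z => \sum_(i < m) w i * k z (y i) * \sum_(j < n) Rm i j * v (x j).

(* Both problems see a solution only through its values at the nodes X.  A
   solution u of the operator equation satisfies u = lam^-1 (f + K_h u), whose
   right-hand side depends on u|_X only, and u|_X solves the linear system.
   Conversely, for a solution v of the system the Nystrom interpolant
   lam^-1 (f + sum_i w_i k(., y_i) sum_j R_ij v_j) takes the value v on X, so it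
   solves the operator equation; it is C^q because every slice k(., y_i) is.
   Restriction and interpolation are thus inverse affine bijections between
   the two solution sets, and interpolating a basis of the kernel of
   lam I - KWR gives a basis of the directions of the operator solutions.
   The only analytic point is that k(., y) is C^q also for y on the boundary
   of Omega: its derivatives are the slices of the continuous extensions of
   those of k, by the mean value theorem at interior points y' close to y. *)

From HB Require Import structures.
From mathcomp Require Import all_boot all_order all_algebra.
From mathcomp Require Import all_classical all_reals all_analysis.
From mathcomp Require Import ring lra.
Import Order.TTheory GRing.Theory Num.Theory.
Import numFieldNormedType.Exports.
Local Open Scope classical_set_scope.
Local Open Scope ring_scope.

Set Implicit Arguments.
Unset Strict Implicit.

Section Topology.
Variable R : realType.

Lemma within_continuous_ballP n (A : set 'rV[R]_n) (f : 'rV[R]_n -> R) :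
  {within A, continuous f} <->
  forall x, A x -> forall e, 0 < e ->
    exists2 dl, 0 < dl & forall y, A y -> ball x dl y -> `|f x - f y| < e.
Proof.
split => [cf x Ax e e0 | H].
- have /cvgrPdist_lt /(_ e e0) := (subspace_continuousP A f).1 cf x Ax.
  rewrite /within /= => /nbhs_ballP [dl dl0 H].
  by exists dl => // y Ay bxy; apply: H.
- apply/subspace_continuousP => x Ax; apply/cvgrPdist_lt => e e0.
  have [dl dl0 Hd] := H x Ax e e0.
  by rewrite /within /=; apply/nbhs_ballP; exists dl => // y bxy Ay; apply: Hd.
Qed.

Lemma closure_ballP n (A : set 'rV[R]_n) x :
  closure A x <-> forall e, 0 < e -> exists y, A y /\ ball x e y.
Proof.
split => [Cx e e0 | H B /nbhs_ballP [e e0 eB]].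
- by have [y [Ay bxy]] := Cx _ (@nbhsx_ballx _ _ x e e0); exists y.
- by have [y [Ay bxy]] := H e e0; exists y; split => //; apply: eB.
Qed.

Lemma ball_row_mx n1 n2 (a a' : 'rV[R]_n1) (b b' : 'rV[R]_n2) e :
  ball a e a' -> ball b e b' -> ball (row_mx a b) e (row_mx a' b').
Proof.
move=> [e0 Ha] [_ Hb]; split => // i j.
rewrite -(splitK j); case: (fintype.split j) => k /=.
  by rewrite !row_mxEl; apply: Ha.
by rewrite !row_mxEr; apply: Hb.
Qed.

Lemma prodset_row_mx n (O : set 'rV[R]_n) a b :
  prodset O (row_mx a b) <-> O a /\ O b.
Proof. by rewrite /prodset /= row_mxKl row_mxKr. Qed.

Lemma closure_prodset_row_mx n (O : set 'rV[R]_n) a b :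
  closure O a -> closure O b -> closure (prodset O) (row_mx a b).
Proof.
move=> /closure_ballP Ca /closure_ballP Cb; apply/closure_ballP => e e0.
have [a' [Oa' ba]] := Ca e e0; have [b' [Ob' bb]] := Cb e e0.
by exists (row_mx a' b'); split; [apply/prodset_row_mx | apply: ball_row_mx].
Qed.

Lemma within_continuous_slice n (O : set 'rV[R]_n) (G : 'rV[R]_(n + n) -> R) y :
  {within closure (prodset O), continuous G} -> closure O y ->
  {within closure O, continuous (fun a => G (row_mx a y))}.
Proof.
move=> /within_continuous_ballP cG Cy; apply/within_continuous_ballP => a Ca e e0.
have [dl dl0 H] := cG _ (closure_prodset_row_mx Ca Cy) e e0.
exists dl => // a' Ca' baa'.
by apply: H; [apply: closure_prodset_row_mx | apply: ball_row_mx; last apply: ballxx].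
Qed.

Lemma within_continuous_closure_eq n (A : set 'rV[R]_n) (f g : 'rV[R]_n -> R) :
  {within closure A, continuous f} -> {within closure A, continuous g} ->
  (forall x, A x -> f x = g x) -> forall x, closure A x -> f x = g x.
Proof.
move=> /within_continuous_ballP cf /within_continuous_ballP cg Afg x Cx.
apply/eqP; rewrite -subr_eq0 -normr_le0; apply/ler_addgt0Pr => e e0; rewrite add0r.
have e20 : 0 < e / 2 by rewrite divr_gt0.
have [d1 d10 H1] := cf x Cx _ e20; have [d2 d20 H2] := cg x Cx _ e20.
have /closure_ballP /(_ (Num.min d1 d2)) := Cx.
rewrite lt_min d10 d20 => /(_ isT) [x' [Ax' bx]].
have /H1 h1 : ball x d1 x' by apply: le_ball bx; rewrite ge_min lexx.
have /H2 h2 : ball x d2 x' by apply: le_ball bx; rewrite ge_min lexx orbT.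
move: h1 h2 => /(_ (subset_closure Ax')) h1 /(_ (subset_closure Ax')) h2.
rewrite -(Afg _ Ax') in h2.
have -> : f x - g x = (f x - f x') - (g x - f x') by ring.
by rewrite [e]splitr; apply: le_trans (ler_normB _ _) _; apply: lerD; apply: ltW.
Qed.

End Topology.

Section LineDerivative.
Variables (R : realType) (N : nat).
Implicit Types (F : 'rV[R]_N -> R) (p v : 'rV[R]_N).

Lemma is_derive_line F p v t0 :
  derivable F (t0 *: v + p) v ->
  is_derive t0 1 (fun t : R => F (t *: v + p)) (derive F (t0 *: v + p) v).
Proof.
have E : (fun h : R => h^-1 *: (((fun t : R => F (t *: v + p)) \o shift t0) (h *: 1)
                                 - F (t0 *: v + p)))
  = (fun h : R => h^-1 *: ((F \o shift (t0 *: v + p)) (h *: v) - F (t0 *: v + p))).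
  apply: funext => h /=; congr (_ *: (F _ - _)).
  by rewrite -[h%:A]/(h * 1) mulr1 scalerDl addrA.
by move=> dF; split; rewrite /derivable /derive E.
Qed.

Lemma is_derive_increment_bound F z v L :
  (forall eps, 0 < eps -> exists2 dl, 0 < dl & forall h : R, `|h| < dl ->
     `|F (h *: v + z) - F z - h * L| <= eps * `|h|) ->
  is_derive z v F L.
Proof.
move=> bound.
have cv : (fun h : R => h^-1 *: ((F \o shift z) (h *: v) - F z)) @ 0^' --> L.
  apply/cvgrPdist_le => eps eps0; have [dl dl0 Hdl] := bound eps eps0.
  rewrite near_withinE; apply/nbhs_ballP; exists dl => // h /= bh hn0.
  have /Hdl : `|h| < dl by move: bh; rewrite /ball /= sub0r normrN.
  set D := F (h *: v + z) - F z => HD.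
  have -> : L - h^-1 *: D = - (h^-1 * (D - h * L)) by rewrite -[_ *: D]/(_ * D); field.
  by rewrite normrN normrM normfV ler_pdivrMl ?normr_gt0 // [`|h| * _]mulrC.
by split; [apply: cvgP cv | apply: cvg_lim cv].
Qed.

Lemma mvt_line_bound F (F' : 'rV[R]_N -> R) p v L eps h :
  (forall t, `|t| <= `|h| -> [/\ derivable F (t *: v + p) v,
     derive F (t *: v + p) v = F' (t *: v + p) & `|F' (t *: v + p) - L| <= eps]) ->
  `|F (h *: v + p) - F p - h * L| <= eps * `|h|.
Proof.
move=> H; pose psi t := F (t *: v + p); pose df t := F' (t *: v + p).
have in_seg a b t : `|a| <= `|h| -> `|b| <= `|h| -> t \in `[a, b] -> `|t| <= `|h|.
  rewrite in_itv /= !ler_norml => /andP[? ?] /andP[? ?] /andP[? ?].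
  by apply/andP; split; lra.
have in_oseg a b t : `|a| <= `|h| -> `|b| <= `|h| -> t \in `]a, b[ -> `|t| <= `|h|.
  move=> ha hb; rewrite in_itv /= => /andP[? ?]; apply: (in_seg a b) => //.
  by rewrite in_itv /=; apply/andP; split; apply: ltW.
have Hd t : `|t| <= `|h| -> is_derive t (1 : R) psi (df t).
  by move=> /H [dF dE _]; rewrite /df -dE; apply: is_derive_line.
have Hc a b : `|a| <= `|h| -> `|b| <= `|h| -> {within `[a, b], continuous psi}.
  move=> ha hb; apply: derivable_within_continuous => t /(in_seg a b t ha hb).
  by move=> /Hd [].
have Hb c : `|c| <= `|h| -> `|df c * h - h * L| <= eps * `|h|.
  move=> /H [_ _ hc]; have -> : df c * h - h * L = (df c - L) * h by ring.
  by rewrite normrM ler_wpM2r.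
have h00 : `|0 : R| <= `|h| by rewrite normr0.
have Fp : F p = psi 0 by rewrite /psi scale0r add0r.
rewrite Fp -[F (h *: v + p)]/(psi h).
case: (leP 0 h) => h0.
  have [c ci ->] := MVT_segment h0 (fun t ti => Hd t (in_oseg 0 h t h00 (lexx _) ti))
    (Hc 0 h h00 (lexx _)).
  by rewrite subr0; apply/Hb/(in_seg 0 h).
have h0' : h <= 0 by apply: ltW.
have [c ci E] := MVT_segment h0' (fun t ti => Hd t (in_oseg h 0 t (lexx _) h00 ti))
  (Hc h 0 (lexx _) h00).
have -> : psi h - psi 0 - h * L = df c * h - h * L.
  by rewrite -[psi h - psi 0]opprB E; ring.
by apply/Hb/(in_seg h 0).
Qed.

End LineDerivative.

Section Evec.
Variables (R : realType) (n : nat).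

Lemma evec_lshift m (i : 'I_n) : evec R (lshift m i) = row_mx (evec R i) 0.
Proof.
apply/matrixP => a b; rewrite -(splitK b); case: (fintype.split b) => k /=.
  by rewrite row_mxEl !mxE (inj_eq (@lshift_inj _ _)).
by rewrite row_mxEr !mxE eq_rlshift andbF.
Qed.

Lemma row_mx_evec m (i : 'I_n) (t : R) (z : 'rV[R]_n) (y : 'rV[R]_m) :
  row_mx (t *: evec R i + z) y = t *: evec R (lshift m i) + row_mx z y.
Proof. by rewrite evec_lshift scale_row_mx scaler0 add_row_mx add0r. Qed.

Lemma ball_add_evec (i : 'I_n) (t : R) (z : 'rV[R]_n) dl :
  `|t| < dl -> ball z dl (t *: evec R i + z).
Proof.
move=> td; split; first exact: le_lt_trans (normr_ge0 _) td.
move=> a j; rewrite /ball /= !mxE opprD addrCA subrr addr0 normrN normrM.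
by case: (_ && _); rewrite ?normr1 ?mulr1 ?normr0 ?mulr0 //; apply: le_lt_trans td.
Qed.

End Evec.

Section SliceDerivative.
Variables (R : realType) (n : nat) (O : set 'rV[R]_n) (i : 'I_n).
Variables (G G' H : 'rV[R]_(n + n) -> R).
Hypotheses (Oo : open O) (GH : forall p, prodset O p -> G p = H p)
  (dH : forall p, prodset O p -> derivable H p (evec R (lshift n i)))
  (DH : forall p, prodset O p -> derive H p (evec R (lshift n i)) = G' p)
  (cG : {within closure (prodset O), continuous G})
  (cG' : {within closure (prodset O), continuous G'}).

Lemma slice_increment_bound_interior z y' h L eps : O y' ->
  (forall t, `|t| <= `|h| ->
     O (t *: evec R i + z) /\ `|G' (row_mx (t *: evec R i + z) y') - L| <= eps) ->
  `|G (row_mx (h *: evec R i + z) y') - G (row_mx z y') - h * L| <= eps * `|h|.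
Proof.
move=> Oy' seg.
have P t : `|t| <= `|h| -> prodset O (row_mx (t *: evec R i + z) y').
  by move=> /seg[Ot _]; apply/prodset_row_mx.
have P0 : prodset O (row_mx z y') by move: (P 0); rewrite normr0 scale0r add0r; apply.
rewrite (GH (P h (lexx _))) (GH P0) row_mx_evec.
apply: (mvt_line_bound (F' := G')) => t /[dup] /P Pt /seg [_ bt].
by rewrite -row_mx_evec; split; [apply: dH | apply: DH | ].
Qed.

(* [y] may lie on the boundary of [O]: approximate it by [y'] in [O], apply the
   mean value theorem there, and pass to the limit using the continuity of [G]. *)
Lemma slice_increment_bound z y : closure O y -> O z ->
  forall eps, 0 < eps -> exists2 dl, 0 < dl & forall h : R, `|h| < dl ->
    `|G (row_mx (h *: evec R i + z) y) - G (row_mx z y) - h * G' (row_mx z y)|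
      <= eps * `|h|.
Proof.
move=> Cy Oz eps eps0; set L := G' (row_mx z y).
have Cz := closure_prodset_row_mx (subset_closure Oz) Cy.
have [d1 d10 near_L] := (within_continuous_ballP _ _).1 cG' _ Cz eps eps0.
have [d2 d20 near_z] := (nbhs_ballP _ _).1 (Oo Oz).
exists (Num.min d1 d2) => [|h]; first by rewrite lt_min d10 d20.
rewrite lt_min => /andP[hd1 hd2].
have Ot t : `|t| <= `|h| -> O (t *: evec R i + z).
  by move=> th; apply/near_z/ball_add_evec/(le_lt_trans th hd2).
have Ch := closure_prodset_row_mx (subset_closure (Ot h (lexx _))) Cy.
apply/ler_addgt0Pr => eta eta0; have eta2 : 0 < eta / 2 by rewrite divr_gt0.
have [r1 r10 near_h] := (within_continuous_ballP _ _).1 cG _ Ch _ eta2.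
have [r0 r00 near_0] := (within_continuous_ballP _ _).1 cG _ Cz _ eta2.
have /closure_ballP /(_ (Num.min d1 (Num.min r0 r1))) := Cy.
rewrite !lt_min d10 r00 r10 => /(_ isT) [y' [Oy' byy']].
have [by1 by0 byr1] : [/\ ball y d1 y', ball y r0 y' & ball y r1 y'].
  by split; apply: le_ball byy'; rewrite !ge_min lexx ?orbT.
have e1 : `|G (row_mx (h *: evec R i + z) y) - G (row_mx (h *: evec R i + z) y')|
    < eta / 2.
  apply: near_h; last exact: ball_row_mx (ballxx _ r10) byr1.
  by apply/subset_closure/prodset_row_mx; split; [apply: Ot|].
have e0 : `|G (row_mx z y) - G (row_mx z y')| < eta / 2.
  apply: near_0; last exact: ball_row_mx (ballxx _ r00) by0.
  exact/subset_closure/prodset_row_mx.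
have inner : `|G (row_mx (h *: evec R i + z) y') - G (row_mx z y') - h * L|
    <= eps * `|h|.
  apply: slice_increment_bound_interior => // t th; split; first exact: Ot.
  rewrite distrC; apply/ltW/near_L.
    by apply/subset_closure/prodset_row_mx; split; [apply: Ot|].
  by apply: ball_row_mx by1; apply/ball_add_evec/(le_lt_trans th hd1).
have -> : G (row_mx (h *: evec R i + z) y) - G (row_mx z y) - h * L =
    (G (row_mx (h *: evec R i + z) y) - G (row_mx (h *: evec R i + z) y'))
    + (G (row_mx (h *: evec R i + z) y') - G (row_mx z y') - h * L)
    - (G (row_mx z y) - G (row_mx z y')) by ring.
apply: le_trans (ler_normB _ _) _; apply: le_trans (lerD (ler_normD _ _) (lexx _)) _.
by move: inner (ltW e1) (ltW e0); lra.
Qed.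

Lemma is_derive_slice z y : closure O y -> O z ->
  is_derive z (evec R i) (fun a => G (row_mx a y)) (G' (row_mx z y)).
Proof.
by move=> Cy Oz; apply: is_derive_increment_bound; apply: slice_increment_bound.
Qed.

End SliceDerivative.

Section Cq.
Variables (R : realType) (n : nat) (O : set 'rV[R]_n) (q : nat).
Hypothesis Oo : open O.

Lemma dpart_eq_on (f g : 'rV[R]_n -> R) : (forall x, O x -> f x = g x) ->
  forall s x, O x -> dpart s f x = dpart s g x.
Proof.
move=> fg; elim => [|j s IH] x Ox /=; first exact: fg.
by apply: near_eq_derive; apply: filterS (Oo Ox) => t Ot; apply: IH.
Qed.

Lemma Cq_on_eq (f g : 'rV[R]_n -> R) :
  Cq_on O q f -> (forall x, closure O x -> f x = g x) -> Cq_on O q g.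
Proof.
move=> [cf df gf] fg.
have fgO x : O x -> f x = g x by move=> /subset_closure; apply: fg.
split.
- by apply: (subspace_eq_continuous _ cf) => x; rewrite inE; apply: fg.
- move=> s i sq x Ox; apply: near_eq_derivable (df s i sq x Ox).
  by apply: filterS (Oo Ox) => t Ot; apply: dpart_eq_on.
- move=> s sq; have [h [ch eh]] := gf s sq; exists h; split => // x Ox.
  by rewrite eh // (dpart_eq_on fgO).
Qed.

Lemma Cq_onD (f g : 'rV[R]_n -> R) :
  Cq_on O q f -> Cq_on O q g -> Cq_on O q (fun z => f z + g z).
Proof.
move=> [cf df gf] [cg dg gg].
have dpartD s : (size s <= q)%N -> forall x, O x ->
    dpart s (fun z => f z + g z) x = dpart s f x + dpart s g x.
  elim: s => [|j s IH] sq x Ox //=.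
  rewrite (near_eq_derive (g := dpart s f + dpart s g)); last first.
    by apply: filterS (Oo Ox) => t Ot; apply: IH (ltnW sq) t Ot.
  by rewrite deriveD //; [apply: df | apply: dg].
split.
- exact: within_continuousD.
- move=> s i sq x Ox; apply: (near_eq_derivable (f := dpart s f + dpart s g)).
    by apply: filterS (Oo Ox) => t Ot; rewrite dpartD // ltnW.
  by apply: derivableD; [apply: df | apply: dg].
- move=> s sq; have [h1 [c1 e1]] := gf s sq; have [h2 [c2 e2]] := gg s sq.
  exists (h1 + h2); split; first exact: within_continuousD.
  by move=> x Ox; rewrite dpartD // -e1 // -e2.
Qed.

Lemma Cq_onZ (c : R) (f : 'rV[R]_n -> R) :
  Cq_on O q f -> Cq_on O q (fun z => c * f z).
Proof.
move=> [cf df gf].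
have cZ (h : 'rV[R]_n -> R) : {within closure O, continuous h} ->
    {within closure O, continuous (fun z => c * h z)}.
  by move=> ch x; apply: cvgM; [apply: cvg_cst | apply: ch].
have dpartZ s : (size s <= q)%N -> forall x, O x ->
    dpart s (fun z => c * f z) x = c * dpart s f x.
  elim: s => [|j s IH] sq x Ox //=.
  rewrite (near_eq_derive (g := c \*: dpart s f)); last first.
    by apply: filterS (Oo Ox) => t Ot; apply: IH (ltnW sq) t Ot.
  by rewrite deriveZ //; apply: df.
split.
- exact: cZ.
- move=> s i sq x Ox; apply: (near_eq_derivable (f := c \*: dpart s f)).
    by apply: filterS (Oo Ox) => t Ot; rewrite dpartZ // ltnW.
  by apply: derivableZ; apply: df.
- move=> s sq; have [h1 [c1 e1]] := gf s sq.
  exists (fun z => c * h1 z); split; first exact: cZ.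
  by move=> x Ox; rewrite dpartZ // e1.
Qed.

Lemma Cq_on0 : Cq_on O q (fun _ => 0).
Proof.
have dpart0 s : dpart s (fun _ : 'rV[R]_n => 0 : R) = fun _ => 0.
  by elim: s => [|j s IH] //=; apply: funext => x; rewrite IH derive_cst.
have c0 : {within closure O, continuous (fun _ : 'rV[R]_n => 0 : R)}.
  exact/continuous_subspaceT/cst_continuous.
split => // [s i _ x _ | s _]; first by rewrite dpart0; apply: derivable_cst.
by exists (fun _ => 0); split => // x _; rewrite dpart0.
Qed.

Lemma Cq_on_sum (I : Type) (r : seq I) (F : I -> 'rV[R]_n -> R) :
  (forall i, Cq_on O q (F i)) -> Cq_on O q (fun z => \sum_(i <- r) F i z).
Proof.
move=> CF; elim: r => [|a r IH].
  by apply: (Cq_on_eq Cq_on0) => x _; rewrite big_nil.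
by apply: (Cq_on_eq (Cq_onD (CF a) IH)) => x _; rewrite big_cons.
Qed.

Lemma dpart_slice (K : 'rV[R]_(n + n) -> R) y :
  Cq_on (prodset O) q K -> closure O y ->
  forall s g, (size s <= q)%N -> {within closure (prodset O), continuous g} ->
  (forall p, prodset O p -> g p = dpart (map (lshift n) s) K p) ->
  forall a, O a -> dpart s (fun b => K (row_mx b y)) a = g (row_mx a y).
Proof.
move=> [cK dK gK] Cy; elim => [|j s IH] g sq cg eg a Oa /=.
  have Ca := closure_prodset_row_mx (subset_closure Oa) Cy.
  by apply: (within_continuous_closure_eq cK cg) Ca => p /eg ->.
have sq' : (size (map (lshift n) s) <= q)%N by rewrite size_map ltnW.
have [g0 [cg0 eg0]] := gK _ sq'.
rewrite (near_eq_derive (g := fun b => g0 (row_mx b y))); last first.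
  by apply: filterS (Oo Oa) => t Ot; apply: IH (ltnW sq) cg0 eg0 t Ot.
have sq'' : (size (map (lshift n) s) < q)%N by rewrite size_map.
by have [] := is_derive_slice Oo eg0 (fun p Pp => dK _ (lshift n j) sq'' p Pp)
  (fun p Pp => esym (eg p Pp)) cg0 cg Cy Oa.
Qed.

Lemma Cq_on_slice (K : 'rV[R]_(n + n) -> R) y :
  Cq_on (prodset O) q K -> closure O y -> Cq_on O q (fun a => K (row_mx a y)).
Proof.
move=> CK Cy; have [cK dK gK] := CK.
split.
- exact: within_continuous_slice.
- move=> s i sq a Oa.
  have sq0 : (size (map (lshift n) s) <= q)%N by rewrite size_map ltnW.
  have sq1 : (size (lshift n i :: map (lshift n) s) <= q)%N by rewrite /= size_map.
  have [g0 [cg0 eg0]] := gK _ sq0; have [g1 [cg1 eg1]] := gK _ sq1.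
  apply: (near_eq_derivable (f := fun b => g0 (row_mx b y))).
    by apply: filterS (Oo Oa) => t Ot; rewrite (dpart_slice CK Cy (ltnW sq) cg0 eg0 Ot).
  have sq' : (size (map (lshift n) s) < q)%N by rewrite size_map.
  by have [] := is_derive_slice Oo eg0 (fun p Pp => dK _ (lshift n i) sq' p Pp)
    (fun p Pp => esym (eg1 p Pp)) cg0 cg1 Cy Oa.
- move=> s sq.
  have sq' : (size (map (lshift n) s) <= q)%N by rewrite size_map.
  have [g0 [cg0 eg0]] := gK _ sq'.
  exists (fun a => g0 (row_mx a y)); split; first exact: within_continuous_slice.
  by move=> a Oa; rewrite (dpart_slice CK Cy sq cg0 eg0 Oa).
Qed.

End Cq.

Section LinearSystem.
Variables (F : fieldType) (p n : nat) (M : 'M[F]_(p, n)).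
Local Notation r := (\rank (kermx M^T)).

Definition kerbasis : 'M[F]_(r, n) := row_base (kermx M^T).

Lemma kernel_colP (v : 'I_n -> F) :
  M *m \col_j v j = 0 <-> (\row_j v j <= kermx M^T)%MS.
Proof.
have E : \row_j v j *m M^T = (M *m \col_j v j)^T.
  by rewrite trmx_mul; congr (_ *m _); apply/matrixP => a b; rewrite !mxE.
split => [Mv | /sub_kermxP].
- by apply/sub_kermxP; rewrite E Mv trmx0.
- by rewrite E => /(congr1 trmx); rewrite trmxK trmx0.
Qed.

Lemma kerbasis_kernel i : M *m \col_j kerbasis i j = 0.
Proof.
apply/kernel_colP.
have -> : \row_j kerbasis i j = row i kerbasis by apply/rowP => j; rewrite !mxE.
by rewrite (submx_trans (row_sub _ _)) // eq_row_base.
Qed.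

Lemma kerbasis_free (c : 'I_r -> F) :
  (forall t, \sum_(i < r) c i * kerbasis i t = 0) -> forall i, c i = 0.
Proof.
move=> Hc.
have /eqP : \row_i c i *m kerbasis = 0.
  apply/rowP => t; rewrite !mxE; under eq_bigr do rewrite mxE.
  exact: Hc.
rewrite mulmx_free_eq0 ?row_base_free // => /eqP /rowP c0 i.
by move: (c0 i); rewrite !mxE.
Qed.

Lemma kerbasis_span v : M *m \col_j v j = 0 ->
  exists c : 'I_r -> F, forall t, v t = \sum_(i < r) c i * kerbasis i t.
Proof.
move/kernel_colP; rewrite -(eq_row_base (kermx M^T)) => /submxP [D vD].
by exists (fun i => D 0 i) => t; move/rowP: vD => /(_ t); rewrite !mxE.
Qed.

Lemma solutions_shift (b : 'cV[F]_p) v (c : 'I_r -> F) : M *m \col_j v j = b ->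
  M *m \col_j (v j + \sum_(i < r) c i * kerbasis i j) = b.
Proof.
move=> Mv.
have -> : \col_j (v j + \sum_(i < r) c i * kerbasis i j)
    = \col_j v j + \sum_(i < r) c i *: \col_j kerbasis i j.
  apply/colP => j; rewrite !mxE summxE; congr (_ + _).
  by apply: eq_bigr => i _; rewrite !mxE.
rewrite mulmxDr Mv mulmx_sumr big1 ?addr0 // => i _.
by rewrite -scalemxAr kerbasis_kernel scaler0.
Qed.

Lemma solutions_diff (b : 'cV[F]_p) v v0 :
  M *m \col_j v j = b -> M *m \col_j v0 j = b ->
  exists c : 'I_r -> F, forall t, v t = v0 t + \sum_(i < r) c i * kerbasis i t.
Proof.
move=> Mv Mv0; have [c Hc] : exists c : 'I_r -> F,
    forall t, v t - v0 t = \sum_(i < r) c i * kerbasis i t.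
  apply: kerbasis_span.
  have -> : \col_j (v j - v0 j) = \col_j v j - \col_j v0 j.
    by apply/colP => j; rewrite !mxE.
  by rewrite mulmxBr Mv Mv0 subrr.
by exists c => t; rewrite -Hc addrC subrK.
Qed.

End LinearSystem.

Arguments kerbasis {F p n} M.

Lemma affine_dim_solutions (R : realType) p n (M : 'M[R]_(p, n)) b v0 :
  M *m \col_j v0 j = b ->
  affine_dim_on setT [set v | M *m \col_j v j = b] (\rank (kermx M^T)).
Proof.
move=> Mv0; exists v0, (fun i t => kerbasis M i t); split.
  by move=> c Hc; apply: kerbasis_free => t; apply: Hc.
move=> v; split => [/= Mv | [c Hc]].
  by have [c Hc] := solutions_diff Mv Mv0; exists c => t _.
have -> : v = fun t => v0 t + \sum_i c i * kerbasis M i t.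
  by apply: funext => t; apply: Hc.
exact: solutions_shift.
Qed.

Section Nystrom.
Variables (R : realType) (d : nat) (Omega : set 'rV[R]_d) (q : nat) (lam : R).
Variables (k : 'rV[R]_d -> 'rV[R]_d -> R) (f : 'rV[R]_d -> R) (n m : nat).
Variables (x : 'I_n -> 'rV[R]_d) (y : 'I_m -> 'rV[R]_d) (w : 'I_m -> R).
Variable (Rm : 'M[R]_(m, n)).
Hypotheses (Oo : open Omega) (lam0 : lam != 0)
  (Ck : Cq_on (prodset Omega) q (fun z => k (lsubmx z) (rsubmx z)))
  (Cf : Cq_on Omega q f) (Cx : forall j, closure Omega (x j))
  (Cy : forall l, closure Omega (y l)).

Definition Kvec (v : 'I_n -> R) (z : 'rV[R]_d) : R :=
  \sum_(l < m) w l * k z (y l) * \sum_(j < n) Rm l j * v j.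

Lemma Kh_Kvec u z : Kh k x y w Rm u z = Kvec (fun j => u (x j)) z.
Proof. by []. Qed.

Lemma KvecE v z : Kvec v z = \sum_(j < n) (\sum_(l < m) w l * k z (y l) * Rm l j) * v j.
Proof.
rewrite /Kvec; under eq_bigr do rewrite mulr_sumr.
rewrite exchange_big; apply: eq_bigr => j _; rewrite mulr_suml.
by apply: eq_bigr => l _; rewrite mulrA.
Qed.

Lemma Kvec_comb r (a : 'I_n -> R) (c : 'I_r -> R) (b : 'I_r -> 'I_n -> R) z :
  Kvec (fun j => a j + \sum_(i < r) c i * b i j) z
    = Kvec a z + \sum_(i < r) c i * Kvec (b i) z.
Proof.
under [X in _ = _ + X]eq_bigr => i _ do rewrite KvecE mulr_sumr.
rewrite !KvecE exchange_big -big_split; apply: eq_bigr => j _ /=.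
rewrite mulrDr mulr_sumr; congr (_ + _); apply: eq_bigr => i _.
by rewrite mulrCA.
Qed.

Lemma Cq_on_Kvec v : Cq_on Omega q (Kvec v).
Proof.
have Ck_y l : Cq_on Omega q (fun z => k z (y l)).
  have Cyl : closure Omega (y l) by apply: Cy.
  apply: (Cq_on_eq Oo (Cq_on_slice Oo Ck Cyl)) => z _.
  by rewrite row_mxKl row_mxKr.
have Cterm l : Cq_on Omega q (fun z => (w l * \sum_j Rm l j * v j) * k z (y l)).
  exact: Cq_onZ.
apply: (Cq_on_eq Oo (Cq_on_sum Oo _ Cterm)) => z _.
by apply: eq_bigr => l _; rewrite mulrAC.
Qed.

Definition Msys : 'M[R]_n := lam%:M - kmat k x y *m diag_mx (\row_i w i) *m Rm.

Lemma Msys_col v j : (Msys *m \col_j0 v j0) j 0 = lam * v j - Kvec v (x j).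
Proof.
rewrite /Msys mulmxBl mul_scalar_mx mul_mx_diag !mxE; congr (_ - _).
rewrite KvecE; apply: eq_bigr => t _; rewrite !mxE; congr (_ * _).
by apply: eq_bigr => l _; rewrite !mxE [k _ _ * _]mulrC.
Qed.

Definition sys_sol := [set v : 'I_n -> R | Msys *m \col_j v j = \col_j f (x j)].

Definition op_sol := [set u : 'rV[R]_d -> R | Cq_on Omega q u /\
  forall z, closure Omega z -> lam * u z - Kh k x y w Rm u z = f z].

Lemma sys_solP v : sys_sol v <-> forall j, lam * v j - Kvec v (x j) = f (x j).
Proof.
split => [/colP Sv j | Sv]; last by apply/colP => j; rewrite Msys_col mxE.
by move: (Sv j); rewrite Msys_col mxE.
Qed.

Definition nystrom (v : 'I_n -> R) (z : 'rV[R]_d) : R := lam^-1 * (f z + Kvec v z).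

Lemma nystrom_at_nodes v : sys_sol v -> forall j, nystrom v (x j) = v j.
Proof. by move=> /sys_solP Sv j; rewrite /nystrom -(Sv j) subrK mulKf. Qed.

Lemma nystrom_sol v : sys_sol v -> op_sol (nystrom v).
Proof.
move=> Sv; split; first exact/(Cq_onZ Oo)/(Cq_onD Oo Cf)/Cq_on_Kvec.
move=> z _; rewrite Kh_Kvec (_ : (fun j => _) = v); last first.
  by apply: funext => j; apply: nystrom_at_nodes.
by rewrite /nystrom mulrA mulfV // mul1r addrK.
Qed.

Lemma restrict_sol u : op_sol u -> sys_sol (fun j => u (x j)).
Proof. by move=> [_ Su]; apply/sys_solP => j; apply: Su. Qed.

Lemma op_sol_nystrom u : op_sol u ->
  forall z, closure Omega z -> u z = nystrom (fun j => u (x j)) z.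
Proof. by move=> [_ Su] z /Su; rewrite /nystrom Kh_Kvec => <-; rewrite subrK mulKf. Qed.

Lemma op_sol_eq u v : op_sol u ->
  (forall z, closure Omega z -> u z = v z) -> op_sol v.
Proof.
move=> [Cu Su] uv; split; first exact: (Cq_on_eq Oo Cu uv).
move=> z Cz; rewrite -uv // Kh_Kvec.
have <- : (fun j => u (x j)) = (fun j => v (x j)) by apply: funext => j; apply: uv.
exact: Su.
Qed.

Definition nystrom_ker i z := lam^-1 * Kvec (fun j => kerbasis Msys i j) z.

Lemma nystrom_ker_at_nodes i j : nystrom_ker i (x j) = kerbasis Msys i j.
Proof.
move/colP: (kerbasis_kernel i) => /(_ j); rewrite Msys_col !mxE => /subr0_eq.
by rewrite /nystrom_ker => <-; rewrite mulKf.
Qed.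

Lemma nystrom_comb v c z :
  nystrom (fun j => v j + \sum_i c i * kerbasis Msys i j) z
    = nystrom v z + \sum_i c i * nystrom_ker i z.
Proof.
rewrite /nystrom Kvec_comb addrA mulrDr mulr_sumr; congr (_ + _).
by apply: eq_bigr => i _; rewrite mulrCA.
Qed.

Lemma affine_dim_op_sol u0 : op_sol u0 ->
  affine_dim_on (closure Omega) op_sol (\rank (kermx Msys^T)).
Proof.
move=> Su0; exists u0, nystrom_ker; split.
  move=> c Hc; apply: kerbasis_free => t.
  by under eq_bigr do rewrite -nystrom_ker_at_nodes; apply: Hc.
move=> v; split => [Sv | [c Hc]].
- have [c Hc] := solutions_diff (restrict_sol Sv) (restrict_sol Su0).
  exists c => z Cz; rewrite (op_sol_nystrom Sv Cz) (op_sol_nystrom Su0 Cz).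
  have -> : (fun j => v (x j)) = fun j => u0 (x j) + \sum_i c i * kerbasis Msys i j.
    exact: funext.
  by rewrite nystrom_comb.
- have Sw := solutions_shift c (restrict_sol Su0).
  apply: (op_sol_eq (nystrom_sol Sw)) => z Cz.
  by rewrite nystrom_comb -(op_sol_nystrom Su0 Cz) Hc.
Qed.

End Nystrom.

Unset Implicit Arguments.

Theorem proposition3p7 (R : realType) (d : nat) (Omega : set 'rV[R]_d)
  (q : nat) (lam : R) (k : 'rV[R]_d -> 'rV[R]_d -> R) (f : 'rV[R]_d -> R)
  (n m : nat) (x : 'I_n -> 'rV[R]_d) (y : 'I_m -> 'rV[R]_d)
  (w : 'I_m -> R) (Rm : 'M[R]_(m, n)) :
  open Omega -> bounded_set Omega -> lam != 0 ->
  Cq_on (prodset Omega) q (fun z => k (lsubmx z) (rsubmx z)) ->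
  Cq_on Omega q f ->
  injective x -> (forall j, closure Omega (x j)) ->
  injective y -> (forall i, closure Omega (y i)) ->
  let M := lam%:M - kmat k x y *m diag_mx (\row_i w i) *m Rm in
  let fX := \col_j f (x j) in
  let Ssys := [set uh : 'I_n -> R | M *m (\col_j uh j) = fX] in
  let Sop := [set u : 'rV[R]_d -> R | Cq_on Omega q u /\
                 forall z, closure Omega z -> lam * u z - Kh k x y w Rm u z = f z] in
  ((exists uh, Ssys uh) <-> (exists u, Sop u)) /\
  ((exists uh, Ssys uh) -> (exists u, Sop u) ->
     exists r : nat, affine_dim_on setT Ssys r /\ affine_dim_on (closure Omega) Sop r).
Proof.
move=> Oo _ lam0 Ck Cf _ Cx _ Cy M fX Ssys Sop.
split.
  split=> [[v Sv] | [u Su]]; eexists.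
    exact: (nystrom_sol Oo lam0 Ck Cf Cy Sv).
  exact: (restrict_sol Cx Su).
move=> [v0 Sv0] [u0 Su0]; exists (\rank (kermx M^T)); split.
  exact: affine_dim_solutions Sv0.
exact: (affine_dim_op_sol Oo lam0 Ck Cf Cx Cy Su0).
Qed.
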